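(* Let $f$ be an automorphism of a finite connected (marked) graph $\Gamma$ such that $\langle f\rangle$ acts freely on $\Gamma$ with a single orbit of vertices. Suppose $s$ and $t$ are edges lying in distinct $\langle f\rangle$-orbits and forming a coherently oriented path of length $2$, meeting at $v=\tau(s)=\iota(t)$. Then there is an $\langle f\rangle$-equivariant Whitehead move (an equivariant expansion followed by an equivariant collapse) sliding $s$ along $t$: after the move and relabelling, the graph and the action are unchanged except that now $\tau(s)=\tau(t)$, and correspondingly $\tau(f^i(s))=\tau(f^i(t))$ for all $i$.
   Context: For an oriented edge $e$, $\iota(e)$ is its initial vertex and $\tau(e)$ its terminal vertex. An equivariant expansion replaces vertices by an $\langle f\rangle$-invariant forest (blow-up), and an equivariant collapse contracts an $\langle f\rangle$-invariant forest; both produce a new marked graph with an automorphism realising the same element of $\mathrm{Out}(F_n)$. *)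

From mathcomp Require Import all_boot.
Set Warnings "-notation-overridden".
Set Implicit Arguments. Unset Strict Implicit. Unset Printing Implicit Defensive.

(* A finite graph: finite vertex set V, finite set E of oriented edges,
   fixed-point-free involution erev (e |-> bar e), initial vertex org = iota. *)
Record graph := Graph {
  V : finType;
  E : finType;
  erev : E -> E;
  org : E -> V;
  rev_invol : involutive erev;
  rev_nofix : forall e, erev e != e
}.

Definition ter (G : graph) (e : E G) : V G := org (erev e).

Definition adj (G : graph) : rel (V G) :=
  fun u w => [exists e : E G, (org e == u) && (ter e == w)].
Definition connected_graph (G : graph) : Prop :=
  forall u w : V G, connect (@adj G) u w.

Record gaut (G : graph) := GAut {
  fV : V G -> V G;
  fE : E G -> E G;
  fV_bij : bijective fV;
  fE_bij : bijective fE;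
  fE_rev : forall e, fE (erev e) = erev (fE e);
  fE_org : forall e, org (fE e) = fV (org e)
}.

(* <f> acts freely on (the realisation of) G: no nontrivial power fixes a
   vertex, and no power inverts an edge (a power fixing an edge fixes a vertex). *)
Definition acts_freely (G : graph) (f : gaut G) : Prop :=
  (forall (k : nat) (x : V G), iter k (fV f) x = x ->
      (forall y, iter k (fV f) y = y) /\ (forall e, iter k (fE f) e = e)) /\
  (forall (k : nat) (e : E G), iter k (fE f) e <> erev e).

Definition single_vertex_orbit (G : graph) (f : gaut G) : Prop :=
  forall u w : V G, exists k : nat, iter k (fV f) u = w.

Definition reduced_step (G : graph) : rel (E G) :=
  fun e1 e2 => (ter e1 == org e2) && (e2 != erev e1).
Definition forest (G : graph) (F : {set E G}) : Prop :=
  (forall e, (e \in F) = (erev e \in F)) /\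
  (forall c : seq (E G), c != [::] -> all (mem F) c -> ~~ cycle (@reduced_step G) c).

Definition Fadj (G : graph) (F : {set E G}) : rel (V G) :=
  fun u w => [exists e in F, (org e == u) && (ter e == w)].

(* equivariant collapse: (G, f) is obtained from (G', f') by collapsing the
   f'-invariant forest F, via the quotient maps pV (vertices) and pE (edges,
   meaningful on edges outside F).  Read in the other direction, (G', f') is an
   equivariant expansion (blow-up) of (G, f). *)
Definition eq_collapse (G' : graph) (f' : gaut G') (F : {set E G'})
    (G : graph) (f : gaut G) (pV : V G' -> V G) (pE : E G' -> E G) : Prop :=
  forest F /\
  (forall e, (e \in F) = (fE f' e \in F)) /\
  (forall u w, pV u = pV w <-> connect (Fadj F) u w) /\
  (forall x, exists u, pV u = x) /\
  {in [predC F] &, injective pE} /\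
  (forall e, exists2 e', e' \notin F & pE e' = e) /\
  (forall e', e' \notin F ->
      [/\ pE (erev e') = erev (pE e'), org (pE e') = pV (org e')
        & pE (fE f' e') = fE f (pE e')]) /\
  (forall u, pV (fV f' u) = fV f (pV u)).

(* Blow up every vertex v into an edge [v -- v'] and move onto v' the two
   half-edges at v lying in the orbits of t and of the reverse of s; as <f>
   acts freely and transitively on vertices, there is exactly one of each.
   Collapsing the new edges gives back G.  Collapsing instead the orbit of t,
   a perfect matching between the new vertices v' and the old vertices
   f^m(v) = tau(t-translate at v), glues the end of every s-translate onto the
   end of the t-translate following it, and the new edges take over the labels
   of the collapsed t-edges. *)
From mathcomp Require Import all_boot.
Set Implicit Arguments. Unset Strict Implicit. Unset Printing Implicit Defensive.

Section Orbits.
Variables (G : graph) (f : gaut G).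

Lemma fE_inj : injective (fE f). Proof. exact: bij_inj (fE_bij f). Qed.

Lemma iter_fE_org k e : org (iter k (fE f) e) = iter k (fV f) (org e).
Proof. by elim: k => //= k IH; rewrite fE_org IH. Qed.

Lemma iter_fE_rev k e : iter k (fE f) (erev e) = erev (iter k (fE f) e).
Proof. by elim: k => //= k IH; rewrite IH fE_rev. Qed.

Lemma iter_fE_ter k e : ter (iter k (fE f) e) = iter k (fV f) (ter e).
Proof. by rewrite /ter -iter_fE_rev iter_fE_org. Qed.

Lemma fconnect_fE_rev e1 e2 :
  fconnect (fE f) (erev e1) (erev e2) = fconnect (fE f) e1 e2.
Proof.
suff rev_imp x y : fconnect (fE f) x y -> fconnect (fE f) (erev x) (erev y).
  by apply/idP/idP => /rev_imp; rewrite ?rev_invol.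
by move=> /iter_findex <-; rewrite -iter_fE_rev fconnect_iter.
Qed.

Lemma fconnect_fE_r e1 e2 : fconnect (fE f) e1 (fE f e2) = fconnect (fE f) e1 e2.
Proof. by rewrite -same_fconnect1_r //; apply: fE_inj. Qed.

Lemma fconnect_ter_shift m e0 e : iter m (fV f) (org e0) = ter e0 ->
  fconnect (fE f) e0 e -> ter e = iter m (fV f) (org e).
Proof.
move=> shift /iter_findex <-.
by rewrite iter_fE_ter iter_fE_org -shift -!iterD addnC.
Qed.

Hypothesis free : acts_freely f.

Lemma orbit_org_inj e0 e1 e2 : fconnect (fE f) e0 e1 -> fconnect (fE f) e0 e2 ->
  org e1 = org e2 -> e1 = e2.
Proof.
have [fixV _] := free; rewrite (fconnect_sym fE_inj) => e10 e02.
move: (connect_trans e10 e02) => /iter_findex <-.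
by rewrite iter_fE_org => /esym /fixV [_ ->].
Qed.

Lemma fconnect_fE_norev e : ~~ fconnect (fE f) e (erev e).
Proof. by have [_ norev] := free; apply/negP => /iter_findex /norev. Qed.

Lemma fconnect_fE_notrev e0 e :
  fconnect (fE f) e0 e -> ~~ fconnect (fE f) e0 (erev e).
Proof.
move=> e0e; apply: contra (fconnect_fE_norev e); apply: connect_trans.
by rewrite (fconnect_sym fE_inj).
Qed.

Hypothesis transitive : single_vertex_orbit f.

Definition translate_at (e : E G) (x : V G) : E G :=
  iter (findex (fV f) (org e) x) (fE f) e.

Lemma fconnect_translate_at e x : fconnect (fE f) e (translate_at e x).
Proof. exact: fconnect_iter. Qed.

Lemma translate_atK e : cancel (translate_at e) (@org G).
Proof.
move=> x; rewrite iter_fE_org; apply: iter_findex.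
by have [k <-] := transitive (org e) x; apply: fconnect_iter.
Qed.

Lemma translate_atE e e' : fconnect (fE f) e e' -> translate_at e (org e') = e'.
Proof.
by move=> ee'; apply: orbit_org_inj (fconnect_translate_at _ _) ee' (translate_atK _ _).
Qed.

Lemma translate_at_fV e x : translate_at e (fV f x) = fE f (translate_at e x).
Proof.
rewrite -{1}[x](translate_atK e) -fE_org; apply: translate_atE.
by rewrite fconnect_fE_r fconnect_translate_at.
Qed.

End Orbits.

Section MatchingCollapse.
Variable G' : graph.
Implicit Type F : {set E G'}.

Definition rev_closed F := forall e, (e \in F) = (erev e \in F).

Lemma org_inj_forest F : rev_closed F -> {in F &, injective (@org G')} -> forest F.
Proof.
move=> revF orgF; split=> // [[//|x p]] _ /allP inF; apply/negP => cyc.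
have xp : x \in x :: p by rewrite mem_head.
have nxp : next (x :: p) x \in x :: p by rewrite mem_next.
case/andP: (next_cycle cyc xp) => /eqP xnx /eqP []; apply: orgF (esym xnx).
  exact: inF.
by rewrite -revF; apply: inF.
Qed.

Lemma Fadj_sym F : rev_closed F -> symmetric (Fadj F).
Proof.
move=> revF; suff Fadj_rev u w : Fadj F u w -> Fadj F w u.
  by move=> u w; apply/idP/idP => /Fadj_rev.
case/existsP => e /andP [eF /andP [/eqP <- /eqP <-]].
by apply/existsP; exists (erev e); rewrite -revF eF /ter rev_invol !eqxx.
Qed.

Variables (G : graph) (f' : gaut G') (f : gaut G) (F : {set E G'}).
Variables (pV : V G' -> V G) (pE : E G' -> E G).
Variables (secV : V G -> V G') (secE : E G -> E G').

Hypothesis F_rev : rev_closed F.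
Hypothesis F_org : {in F &, injective (@org G')}.
Hypothesis F_fE : forall e, (e \in F) = (fE f' e \in F).
Hypothesis pV_F : {in F, forall e, pV (org e) = pV (ter e)}.
Hypothesis secVK : cancel secV pV.
Hypothesis connect_secV : forall u, connect (Fadj F) u (secV (pV u)).
Hypothesis secE_F : forall e, secE e \notin F.
Hypothesis secEK : cancel secE pE.
Hypothesis pEK : {in [predC F], cancel pE secE}.
Hypothesis pE_hom : forall e', e' \notin F ->
  [/\ pE (erev e') = erev (pE e'), org (pE e') = pV (org e')
    & pE (fE f' e') = fE f (pE e')].
Hypothesis pV_fV : forall u, pV (fV f' u) = fV f (pV u).

Lemma pV_eq_connect u w : pV u = pV w <-> connect (Fadj F) u w.
Proof.
have sym : connect_sym (Fadj F) by apply/sym_connect_sym/Fadj_sym.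
split=> [uw | /connectP [q]].
  by apply: connect_trans (connect_secV u) _; rewrite uw sym.
elim: q u => [|x q IH] u /=; first by move=> _ ->.
case/andP => /existsP [e /andP [eF /andP [/eqP <- /eqP <-]]] qpath qlast.
by rewrite pV_F // IH.
Qed.

Lemma matching_eq_collapse : eq_collapse f' F f pV pE.
Proof.
split; first exact: org_inj_forest.
do 2! split=> //; first exact: pV_eq_connect.
split; first by move=> x; exists (secV x).
split; first exact: can_in_inj pEK.
by split=> // e; exists (secE e).
Qed.

End MatchingCollapse.

Section Blowup.
Variables (G : graph) (f : gaut G) (M : pred (E G)).
Hypothesis M_fE : forall e, M (fE f e) = M e.

(* [inl v] is the old vertex v and [inr v] the new vertex v', which receives
   the half-edges of M at v; the new edge [inr (v, false)] goes from v to v'. *)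
Definition blowup_V : finType := (V G + V G)%type.
Definition blowup_E : finType := (E G + V G * bool)%type.

Definition blowup_rev (x : blowup_E) : blowup_E :=
  match x with inl e => inl (erev e) | inr (v, b) => inr (v, ~~ b) end.

Definition blowup_org (x : blowup_E) : blowup_V :=
  match x with
  | inl e => if M e then inr (org e) else inl (org e)
  | inr (v, b) => if b then inr v else inl v
  end.

Lemma blowup_rev_invol : involutive blowup_rev.
Proof. by case=> [e|[v b]] /=; rewrite ?rev_invol ?negbK. Qed.

Lemma blowup_rev_nofix x : blowup_rev x != x.
Proof.
case: x => [e|[v b]] /=; apply/eqP => -[] //; last by case: b.
by apply/eqP; apply: rev_nofix.
Qed.

Definition blowup := Graph blowup_org blowup_rev_invol blowup_rev_nofix.

Definition blowup_fV (x : blowup_V) : blowup_V :=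
  match x with inl v => inl (fV f v) | inr v => inr (fV f v) end.

Definition blowup_fE (x : blowup_E) : blowup_E :=
  match x with inl e => inl (fE f e) | inr (v, b) => inr (fV f v, b) end.

Lemma blowup_fV_bij : bijective blowup_fV.
Proof. by apply: injF_bij => -[x|x] [y|y] //= [] /(bij_inj (fV_bij f)) ->. Qed.

Lemma blowup_fE_bij : bijective blowup_fE.
Proof.
apply: injF_bij => -[x|[x b]] [y|[y c]] //= [] //; first by move/fE_inj ->.
by move=> /(bij_inj (fV_bij f)) -> ->.
Qed.

Lemma blowup_fE_rev (x : E blowup) : blowup_fE (erev x) = @erev blowup (blowup_fE x).
Proof. by case: x => [e|[v b]] //=; rewrite fE_rev. Qed.

Lemma blowup_fE_org (x : E blowup) : @org blowup (blowup_fE x) = blowup_fV (org x).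
Proof.
case: x => [e|[v []]] //=.
by rewrite M_fE fE_org; case: (M e).
Qed.

Definition blowup_aut : gaut blowup :=
  @GAut blowup blowup_fV blowup_fE blowup_fV_bij blowup_fE_bij
    blowup_fE_rev blowup_fE_org.

Definition new_edges : {set E blowup} :=
  [set x | if x is inr _ then true else false].

Definition blowup_projV (x : blowup_V) : V G :=
  match x with inl v => v | inr v => v end.

(* The value [e0] on the collapsed new edges is irrelevant. *)
Definition blowup_projE (e0 : E G) (x : blowup_E) : E G :=
  if x is inl e then e else e0.

Lemma blowup_collapse e0 :
  eq_collapse blowup_aut new_edges f blowup_projV (blowup_projE e0).
Proof.
apply: (matching_eq_collapse (G' := blowup) (secV := inl) (secE := inl)) => //.
- by case=> [e|[v b]]; rewrite !inE.
- by move=> [x|[v []]] [y|[w []]]; rewrite !inE //= => _ _ -[->].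
- by case=> [e|[v b]]; rewrite !inE.
- by move=> [e|[v []]]; rewrite inE.
- case=> [v|v]; first exact: connect0.
  by apply/connect1/existsP; exists (inr (v, true)); rewrite inE /ter /= !eqxx.
- by move=> e; rewrite inE.
- by move=> [e|[v b]]; rewrite ?inE.
- by move=> [e|[v b]]; rewrite inE //= => _; split=> //; case: (M e).
- by case.
Qed.

End Blowup.

Section Slide.
Variables (G : graph) (f : gaut G) (s : E G) (m : nat).

Definition slide_org (e : E G) : V G :=
  if fconnect (fE f) s (erev e) then iter m (fV f) (org e) else org e.

Definition slide := Graph slide_org (@rev_invol G) (@rev_nofix G).

Lemma slide_fE_org (e : E slide) : @org slide (fE f e) = fV f (org e).
Proof.
rewrite /= /slide_org -fE_rev fconnect_fE_r fE_org.
by case: ifP => // _; rewrite -iterSr.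
Qed.

Definition slide_aut : gaut slide :=
  @GAut slide (fV f) (fE f) (fV_bij f) (fE_bij f) (@fE_rev G f) slide_fE_org.

Lemma slide_org_unmoved (e : E slide) :
  (forall i, e <> erev (iter i (fE f) s)) -> org e = @org G e.
Proof.
move=> not_s; rewrite /= /slide_org; case: ifP => // /iter_findex s_e.
by case: (not_s (findex (fE f) s (erev e))); rewrite s_e rev_invol.
Qed.

End Slide.

Section WhiteheadMove.
Variables (G : graph) (f : gaut G) (s t : E G) (m : nat).
Hypothesis free : acts_freely f.
Hypothesis transitive : single_vertex_orbit f.
Hypothesis s_not_t : ~~ fconnect (fE f) s t.
Hypothesis s_not_rev_t : ~~ fconnect (fE f) s (erev t).
Hypothesis t_shift : iter m (fV f) (org t) = ter t.

Definition moved : pred (E G) :=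
  [pred e | fconnect (fE f) t e || fconnect (fE f) s (erev e)].

Lemma moved_fE e : moved (fE f e) = moved e.
Proof. by rewrite /moved /= -fE_rev !fconnect_fE_r. Qed.

Definition expansion := blowup moved.

Definition t_edges : {set E expansion} :=
  [set x | if x is inl e then fconnect (fE f) t e || fconnect (fE f) t (erev e)
           else false].

Lemma t_orbit_not_s e : fconnect (fE f) t e -> ~~ fconnect (fE f) s e.
Proof.
move=> te; apply: contra s_not_t => se.
by rewrite (connect_trans se) // (fconnect_sym (@fE_inj _ f)).
Qed.

Lemma t_orbit_not_rev_s e : fconnect (fE f) t e -> ~~ fconnect (fE f) s (erev e).
Proof.
move=> te; apply: contra s_not_rev_t => se; apply: connect_trans se _.
by rewrite fconnect_fE_rev (fconnect_sym (@fE_inj _ f)).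
Qed.

Lemma t_orbit_unmoved_rev e : fconnect (fE f) t e -> ~~ moved (erev e).
Proof.
move=> te; rewrite /moved /= negb_or rev_invol fconnect_fE_notrev //=.
exact: t_orbit_not_s.
Qed.

Lemma expansion_org_t e : fconnect (fE f) t e -> @org expansion (inl e) = inr (org e).
Proof. by move=> te; rewrite /= /moved /= te. Qed.

Lemma expansion_org_rev_t e :
  fconnect (fE f) t (erev e) -> @org expansion (inl e) = inl (org e).
Proof.
by move=> te; have := t_orbit_unmoved_rev te; rewrite rev_invol /= => /negbTE ->.
Qed.

Lemma expansion_ter_rev_t e :
  fconnect (fE f) t (erev e) -> @ter expansion (inl e) = inr (ter e).
Proof. exact: expansion_org_t. Qed.

Lemma expansion_ter_t e : fconnect (fE f) t e ->
  @ter expansion (inl e) = inl (iter m (fV f) (org e)).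
Proof.
move=> te; rewrite /ter /= (negbTE (t_orbit_unmoved_rev te)).
by rewrite -/(ter e) (fconnect_ter_shift t_shift te).
Qed.

Definition collapse_projV (x : blowup_V G) : V G :=
  match x with inl v => v | inr v => iter m (fV f) v end.

Definition collapse_projE (x : blowup_E G) : E G :=
  match x with
  | inl e => e
  | inr (v, b) => if b then erev (translate_at f t v) else translate_at f t v
  end.

Definition collapse_secE (e : E G) : blowup_E G :=
  if fconnect (fE f) t e then inr (org e, false)
  else if fconnect (fE f) t (erev e) then inr (ter e, true) else inl e.

Lemma t_edges_rev : rev_closed t_edges.
Proof. by case=> [e|[v b]]; rewrite !inE //= rev_invol orbC. Qed.

Lemma t_edges_fE e : (e \in t_edges) = (fE (blowup_aut moved_fE) e \in t_edges).
Proof. by case: e => [e|[v b]]; rewrite !inE //= -fE_rev !fconnect_fE_r. Qed.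

Lemma t_edges_org_inj : {in t_edges &, injective (@org expansion)}.
Proof.
case=> [a|x] [b|y]; rewrite !inE // => /orP [] ta /orP [] tb.
- rewrite !expansion_org_t // => -[ab]; congr inl; exact: orbit_org_inj ta tb ab.
- by rewrite expansion_org_t // expansion_org_rev_t.
- by rewrite expansion_org_rev_t // expansion_org_t.
- rewrite !expansion_org_rev_t // => -[ab]; congr inl.
  by apply: (orbit_org_inj free (e0 := erev t)) ab; rewrite -fconnect_fE_rev rev_invol.
Qed.

Lemma collapse_projV_t_edges :
  {in t_edges, forall e : E expansion,
     collapse_projV (org e) = collapse_projV (ter e)}.
Proof.
case=> [e|x]; rewrite inE // => /orP [te|te].
  by rewrite expansion_org_t // expansion_ter_t.
rewrite expansion_org_rev_t // expansion_ter_rev_t //=.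
by rewrite -(fconnect_ter_shift t_shift te) /ter rev_invol.
Qed.

Lemma connect_t_edges u : connect (Fadj t_edges) u (inl (collapse_projV u)).
Proof.
case: u => [v|v]; first exact: connect0.
apply/connect1/existsP; exists (inl (translate_at f t v)).
have tv := fconnect_translate_at f t v.
rewrite inE tv expansion_org_t // expansion_ter_t //.
by rewrite (translate_atK transitive) !eqxx.
Qed.

Lemma collapse_secE_notin e : collapse_secE e \notin t_edges.
Proof.
rewrite /collapse_secE; case: ifP => [_|te]; first by rewrite inE.
by case: ifP => [_|te']; rewrite inE // te te'.
Qed.

Lemma collapse_secEK : cancel collapse_secE collapse_projE.
Proof.
move=> e; rewrite /collapse_secE; case: ifP => te.
  exact: (translate_atE free transitive te).
case: ifP => te' //=.
by rewrite (translate_atE free transitive te') rev_invol.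
Qed.

Lemma collapse_projEK : {in [predC t_edges], cancel collapse_projE collapse_secE}.
Proof.
move=> [e|[v []]]; rewrite !inE /= => not_t; rewrite /collapse_secE.
- by move: not_t; rewrite negb_or => /andP [/negbTE -> /negbTE ->].
- have tv := fconnect_translate_at f t v.
  rewrite rev_invol tv (negbTE (fconnect_fE_notrev free tv)).
  by rewrite /ter rev_invol (translate_atK transitive).
- by rewrite fconnect_translate_at (translate_atK transitive).
Qed.

Lemma collapse_projE_hom (e' : E expansion) : e' \notin t_edges ->
  [/\ collapse_projE (erev e') = erev (collapse_projE e'),
      @org (slide f s m) (collapse_projE e') = collapse_projV (org e')
    & collapse_projE (fE (blowup_aut moved_fE) e') = fE f (collapse_projE e')].
Proof.
case: e' => [e|[v b]]; rewrite !inE /= => not_t.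
  split=> //; move: not_t; rewrite negb_or => /andP [/negbTE te _].
  by rewrite /= /slide_org /moved /= te /=; case: ifP.
have tv := fconnect_translate_at f t v; split.
- by case: b; rewrite /= ?rev_invol.
- case: b; rewrite /= /slide_org.
    rewrite rev_invol (negbTE (t_orbit_not_s tv)) -/(ter _).
    by rewrite (fconnect_ter_shift t_shift tv) (translate_atK transitive).
  by rewrite (negbTE (t_orbit_not_rev_s tv)) (translate_atK transitive).
- by case: b; rewrite /= translate_at_fV ?fE_rev.
Qed.

Lemma expansion_collapse_slide :
  eq_collapse (blowup_aut moved_fE) t_edges (slide_aut f s m)
    collapse_projV collapse_projE.
Proof.
apply: (matching_eq_collapse (G' := expansion) (G := slide f s m) (secV := inl)
  (secE := collapse_secE)) => //.
- exact: t_edges_rev.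
- exact: t_edges_org_inj.
- exact: t_edges_fE.
- exact: collapse_projV_t_edges.
- exact: connect_t_edges.
- exact: collapse_secE_notin.
- exact: collapse_secEK.
- exact: collapse_projEK.
- exact: collapse_projE_hom.
- by case=> [v|v] //=; rewrite -iterSr.
Qed.

Lemma inl_notin_t_edges e :
  (forall i, e <> iter i (fE f) t /\ e <> erev (iter i (fE f) t)) ->
  inl e \notin t_edges.
Proof.
move=> not_t; rewrite inE negb_or; apply/andP; split; apply/negP => /iter_findex te.
  exact: (proj1 (not_t _)) (esym te).
by apply: (proj2 (not_t (findex (fE f) t (erev e)))); rewrite te rev_invol.
Qed.

Hypothesis st_path : ter s = org t.

Lemma slide_org_rev_s i :
  @org (slide f s m) (erev (iter i (fE f) s)) = ter (iter i (fE f) t).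
Proof.
rewrite /= /slide_org rev_invol fconnect_iter -/(ter _) !iter_fE_ter st_path -t_shift.
by rewrite -!iterD addnC.
Qed.

End WhiteheadMove.

Theorem lemma6p4 (G : graph) (f : gaut G) (s t : E G) :
  connected_graph G ->
  acts_freely f ->
  single_vertex_orbit f ->
  (* s and t lie in distinct <f>-orbits of (unoriented) edges *)
  (forall i : nat, iter i (fE f) s <> t /\ iter i (fE f) s <> erev t) ->
  (* s, t form a coherently oriented path of length 2 *)
  ter s = org t ->
  exists (G' : graph) (f' : gaut G') (F1 F2 : {set E G'})
         (G'' : graph) (f'' : gaut G'')
         (p1V : V G' -> V G) (p1E : E G' -> E G)
         (p2V : V G' -> V G'') (p2E : E G' -> E G'')
         (phiV : V G'' -> V G) (phiE : E G'' -> E G),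
    (* equivariant expansion G <- G' (collapsing F1 gives back G) *)
    eq_collapse f' F1 f p1V p1E /\
    (* equivariant collapse G' -> G'' of F2 *)
    eq_collapse f' F2 f'' p2V p2E /\
    (* relabelling: an equivariant identification of G'' with the slid graph,
       which has the same vertices, edges, bar-involution and action as G *)
    bijective phiV /\ bijective phiE /\
    (forall x, phiE (erev x) = erev (phiE x)) /\
    (forall x, phiV (fV f'' x) = fV f (phiV x)) /\
    (forall x, phiE (fE f'' x) = fE f (phiE x)) /\
    (* incidence in the slid graph: tau(f^i s) becomes tau(f^i t) ... *)
    (forall (x : E G'') (i : nat), phiE x = erev (iter i (fE f) s) ->
        phiV (org x) = ter (iter i (fE f) t)) /\
    (* ... and all other incidences are unchanged *)
    (forall x : E G'', (forall i : nat, phiE x <> erev (iter i (fE f) s)) ->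
        phiV (org x) = org (phiE x)) /\
    (* the labels are those carried along by the move, for every edge of G
       outside the orbit of t *)
    (forall (e' : E G') (e : E G), e' \notin F1 -> p1E e' = e ->
        (forall i : nat, e <> iter i (fE f) t /\ e <> erev (iter i (fE f) t)) ->
        e' \notin F2 /\ phiE (p2E e') = e).
Proof.
move=> _ free transitive st_orbits st_path.
have [m t_shift] := transitive (org t) (ter t).
have s_not_t : ~~ fconnect (fE f) s t.
  by apply/negP => /iter_findex; apply: (proj1 (st_orbits _)).
have s_not_rev_t : ~~ fconnect (fE f) s (erev t).
  by apply/negP => /iter_findex; apply: (proj2 (st_orbits _)).
exists (expansion f s t), (blowup_aut (moved_fE f s t)), (new_edges _), (t_edges f s t),
  (slide f s m), (slide_aut f s m), (@blowup_projV G), (blowup_projE s),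
  (collapse_projV f m), (collapse_projE f t), id, id.
split; first exact: blowup_collapse.
split; first exact: expansion_collapse_slide.
do 2 (split; first by exists id).
do 3 (split; first by []).
split; first by move=> x i /= ->; apply: slide_org_rev_s.
split; first exact: slide_org_unmoved.
by case=> [e'|x] e; rewrite inE // => _ <- /inl_notin_t_edges.
Qed.
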